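(* Let $b\in\mathbb{C}\setminus\{0,1\}$, let $\mu\ge 0$ be an integer, and let \[ W_\mu=\operatorname{span}_{\mathbb{C}}\{r_1(z),\dots,r_\mu(z)\}\oplus H_\mu \qquad(\text{so } W_0=H_0), \] where $r_i(z)=z^{-i}\big(b\,e^{z}+(1-b)\sum_{j=0}^{i-1}z^j/j!\big)$. Then $W_\mu\in Gr^{(0)}(H)$, $W_\mu$ satisfies the CKP condition, i.e. $\operatorname{Res}_z f(z)g(-z)=0$ for all $f,g\in W_\mu$, and \[ W_\mu=\{\,f(z)\in H_{-\mu}\;:\;\operatorname{Res}_z f(z)\,r_i(-z)=0\ \text{ for } 1\le i\le \mu\,\}. \]
   Context: Work in $H=\mathbb{C}((z))$, formal Laurent series in $z$ with finitely many negative powers, with $e^z=\sum_{k\ge0}z^k/k!$. For $k\in\mathbb{Z}$, $H_k=z^k\mathbb{C}[[z]]$ (series whose lowest power is at least $k$). The bilinear form on $H$ is $(f,g)=\operatorname{Res}_z f(z)g(z)$ (coefficient of $z^{-1}$). $Gr(H)$ is the set of linear subspaces $W\subset H$ with $H_k\subset W\subset H_\ell$ for some integers $k>\ell$; $Gr^{(j)}(H)$ consists of those $W\in Gr(H)$ with $j=k-\dim(W/H_k)$ whenever $H_k\subset W$. *)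

From mathcomp Require Import all_boot all_order all_algebra.
From mathcomp Require Import complex.
From mathcomp Require Import Rstruct.
From Stdlib Require Import ClassicalEpsilon.
Set Implicit Arguments. Unset Strict Implicit. Unset Printing Implicit Defensive.
Import Order.TTheory GRing.Theory Num.Theory.
Local Open Scope ring_scope.

Definition C : numClosedFieldType := (Rdefinitions.R)[i].

(* A (formal) series in z, given by its coefficients: f n = coefficient of z^n.
   Elements of H = C((z)) are those with a lower bound on their support. *)
Definition ser := int -> C.

Definition Hk (k : int) (f : ser) : Prop := forall n : int, n < k -> f n = 0.

Definition inH (f : ser) : Prop := exists k : int, Hk k f.

Definition ser0 : ser := fun _ => 0.
Definition seradd (f g : ser) : ser := fun n => f n + g n.
Definition serscale (c : C) (f : ser) : ser := fun n => c * f n.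
Definition sersum (d : nat) (c : 'I_d -> C) (w : 'I_d -> ser) : ser :=
  fun n => \sum_(i < d) c i * w i n.

(* f(z) |-> f(-z) *)
Definition serneg (f : ser) : ser := fun n => (-1) ^ n * f n.

(* A lower bound for the support of f (chosen classically; arbitrary if f
   is not in H). *)
Definition lb (f : ser) : int := epsilon (inhabits 0%R) (fun N => Hk N f).

(* Res_z f(z) g(z) = coefficient of z^{-1} in f g = sum_n f_n g_{-1-n};
   for f, g in H only n in [lb f, -1 - lb g] contribute. *)
Definition Res (f g : ser) : C :=
  \sum_(i < `|(- lb f - lb g)%R|%N) f (lb f + i%:Z) * g (-1 - (lb f + i%:Z)).

Definition expz : ser := fun n =>
  match n with Posz m => (m`!%:R)^-1 | Negz _ => 0 end.

Definition mono (j : int) : ser := fun n => if n == j then 1 else 0.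

Definition rfun (b : C) (i : nat) : ser := fun n =>
  let m := n + i%:Z in
  b * expz m + (1 - b) * \sum_(j < i) (j`!%:R)^-1 * mono j%:Z m.

Definition Wmu (b : C) (mu : nat) (f : ser) : Prop :=
  exists (c : 'I_mu -> C) (h : ser), Hk mu%:Z h /\
    f = seradd (sersum c (fun i => rfun b i.+1)) h.

Definition subspace (W : ser -> Prop) : Prop :=
  W ser0 /\ (forall f g, W f -> W g -> W (seradd f g)) /\
  (forall c f, W f -> W (serscale c f)).

Definition Gr (W : ser -> Prop) : Prop :=
  subspace W /\ exists k l : int, l < k /\
    (forall f, Hk k f -> W f) /\ (forall f, W f -> Hk l f).

Definition quotdim (W : ser -> Prop) (k : int) (d : nat) : Prop :=
  exists w : 'I_d -> ser, (forall i, W (w i)) /\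
    (forall c : 'I_d -> C, Hk k (sersum c w) -> forall i, c i = 0) /\
    (forall f, W f -> exists c : 'I_d -> C,
        Hk k (fun n => f n - sersum c w n)).

Definition Grj (j : int) (W : ser -> Prop) : Prop :=
  Gr W /\ forall k : int, (forall f, Hk k f -> W f) ->
    forall d : nat, quotdim W k d -> j = k - d%:Z.

Definition CKP (W : ser -> Prop) : Prop :=
  forall f g, W f -> W g -> Res f (serneg g) = 0.

(* For f, g in H_{-mu} the residue Res f(z) g(-z) is a finite sum over a fixed
   window of coefficients, hence bilinear.  The coefficient of z^(m-i) in r_i
   is (b + (1-b)[m < i]) / m!, so in Res r_i(z) r_j(-z) every product of
   weights equals b and the residue is a multiple of (1 - 1)^(i+j-1) = 0: this
   gives the CKP condition.  Since r_i = z^(-i) + O(z^(1-i)), the r_i span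
   H_{-mu} modulo H_0, and Res g(z) r_(p+1)(-z) = +-g_p for g in H_p, so a
   series of H_0 orthogonal to every r_i(-z) lies in H_mu: this gives the
   description of W_mu.  Finally r_1, ..., r_mu, z^mu, ..., z^(k-1) is a basis
   of W_mu / H_k, so its dimension is k; that this dimension is well defined
   follows from a rank argument on truncated coefficient matrices. *)

From mathcomp Require Import all_boot all_order all_algebra zify ring.
From Stdlib Require Import FunctionalExtensionality ClassicalEpsilon.
Import Order.TTheory GRing.Theory Num.Theory.
Local Open Scope ring_scope.

Lemma Hk_le {k l : int} {f : ser} : Hk k f -> l <= k -> Hk l f.
Proof. by move=> Hf lk n nl; apply: Hf; lia. Qed.

Lemma Hk_serneg {k : int} {f : ser} : Hk k f -> Hk k (serneg f).
Proof. by move=> Hf n nk; rewrite /serneg Hf ?mulr0. Qed.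

Lemma Hk_seradd {k : int} {f g : ser} : Hk k f -> Hk k g -> Hk k (seradd f g).
Proof. by move=> Hf Hg n nk; rewrite /seradd Hf ?Hg ?addr0. Qed.

Lemma Hk_sersum k d (c : 'I_d -> C) w : (forall i, Hk k (w i)) -> Hk k (sersum c w).
Proof. by move=> Hw n nk; rewrite /sersum big1 // => i _; rewrite Hw ?mulr0. Qed.

Lemma Hk_mono (j k : int) : k <= j -> Hk k (mono j).
Proof. by move=> kj n nk; rewrite /mono; case: eqP => // nj; lia. Qed.

Lemma serneg_add f g : serneg (seradd f g) = seradd (serneg f) (serneg g).
Proof. by apply: functional_extensionality => n; rewrite /serneg /seradd mulrDr. Qed.

Lemma serneg_sum d (c : 'I_d -> C) w :
  serneg (sersum c w) = sersum c (fun i => serneg (w i)).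
Proof.
apply: functional_extensionality => n; rewrite /serneg /sersum mulr_sumr.
by apply: eq_bigr => i _; rewrite mulrCA.
Qed.

Definition resw (a : int) (N : nat) (f g : ser) : C :=
  \sum_(i < N) f (a + i%:Z) * g (-1 - (a + i%:Z)).

Lemma resw_widenr a N k f g :
  Hk (- a - N%:Z) g -> resw a (N + k) f g = resw a N f g.
Proof.
move=> Hg; elim: k => [|k IH]; first by rewrite addn0.
by rewrite addnS /resw big_ord_recr /= Hg ?mulr0 ?addr0 //; lia.
Qed.

Lemma resw_widenl a N k f g : Hk a f -> resw (a - k%:Z) (N + k) f g = resw a N f g.
Proof.
move=> Hf; elim: k => [|k IH]; first by rewrite addn0 subr0.
rewrite -IH addnS /resw big_ord_recl /= Hf ?mul0r ?add0r; last by lia.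
apply: eq_bigr => i _.
by have -> : a - k.+1%:Z + (bump 0 i)%:Z = a - k%:Z + i%:Z by rewrite /bump; lia.
Qed.

Lemma resw_window a N a' N' f g :
  Hk a f -> Hk (- a - N%:Z) g -> Hk a' f -> Hk (- a' - N'%:Z) g ->
  resw a N f g = resw a' N' f g.
Proof.
wlog le_a'a : a N a' N' / a' <= a.
  move=> W Hf Hg Hf' Hg'; case: (lerP a' a) => [|/ltW] le; first exact: W.
  by symmetry; apply: W.
move=> Hf Hg _ Hg'; pose k := `|a - a'|%N.
have -> : a' = a - k%:Z by rewrite /k; lia.
rewrite -(resw_widenl a N k f g Hf).
have HgN : Hk (- (a - k%:Z) - (N + k)%:Z) g by apply: (Hk_le Hg); lia.
have HgN' : Hk (- (a - k%:Z) - N'%:Z) g by apply: (Hk_le Hg'); rewrite /k; lia.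
case: (leqP (N + k) N') => [le|/ltnW le].
  by rewrite -(subnKC le) [RHS]resw_widenr.
by rewrite -(subnKC le) [LHS]resw_widenr.
Qed.

Lemma lb_spec (f : ser) : inH f -> Hk (lb f) f.
Proof. exact: epsilon_spec. Qed.

Lemma Res_window a N f g : Hk a f -> Hk (- a - N%:Z) g -> Res f g = resw a N f g.
Proof.
move=> Hf Hg.
have Hlf := lb_spec f (ex_intro (Hk^~ f) a Hf).
have Hlg := lb_spec g (ex_intro (Hk^~ g) _ Hg).
by apply: resw_window => //; apply: (Hk_le Hlg); lia.
Qed.

Lemma Res_sym_window (m : nat) f g :
  Hk (- m%:Z) f -> Hk (- m%:Z) g -> Res f g = resw (- m%:Z) (m + m) f g.
Proof. by move=> Hf Hg; apply: Res_window => //; apply: (Hk_le Hg); lia. Qed.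

Lemma resw_addl a N f1 f2 g : resw a N (seradd f1 f2) g = resw a N f1 g + resw a N f2 g.
Proof. by rewrite /resw -big_split; apply: eq_bigr => i _; rewrite mulrDl. Qed.

Lemma resw_addr a N f g1 g2 : resw a N f (seradd g1 g2) = resw a N f g1 + resw a N f g2.
Proof. by rewrite /resw -big_split; apply: eq_bigr => i _; rewrite mulrDr. Qed.

Lemma resw_suml a N d (c : 'I_d -> C) w g :
  resw a N (sersum c w) g = \sum_i c i * resw a N (w i) g.
Proof.
rewrite /resw /sersum; under eq_bigr do rewrite mulr_suml.
rewrite exchange_big; apply: eq_bigr => i _; rewrite mulr_sumr.
by apply: eq_bigr => j _; rewrite mulrA.
Qed.

Lemma resw_sumr a N d (c : 'I_d -> C) w f :
  resw a N f (sersum c w) = \sum_i c i * resw a N f (w i).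
Proof.
rewrite /resw /sersum; under eq_bigr do rewrite mulr_sumr.
rewrite exchange_big; apply: eq_bigr => i _; rewrite mulr_sumr.
by apply: eq_bigr => j _; rewrite mulrCA.
Qed.

Lemma resw_eq0l a N f g : Hk (a + N%:Z) f -> resw a N f g = 0.
Proof.
by move=> Hf; rewrite /resw big1 // => i _; rewrite Hf ?mul0r //; have := ltn_ord i; lia.
Qed.

Lemma resw_eq0r a N f g : Hk (- a) g -> resw a N f g = 0.
Proof. by move=> Hg; rewrite /resw big1 // => i _; rewrite Hg ?mulr0 //; lia. Qed.

Lemma trunc_exp_coef (i m : nat) :
  \sum_(j < i) (j`!%:R)^-1 * mono j%:Z m%:Z = (m < i)%:R / m`!%:R :> C.
Proof.
elim: i => [|i IH]; first by rewrite big_ord0 mul0r.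
rewrite big_ord_recr /= IH /mono eqz_nat ltnS.
case: (ltngtP m i) => [_|_|->]; rewrite ?mulr0 ?addr0 //.
by rewrite mulr0n mul0r add0r mulr1n mul1r mulr1.
Qed.

Lemma rfun_coef b i (m : nat) :
  rfun b i (m%:Z - i%:Z) = (b + (1 - b) * (m < i)%:R) / m`!%:R.
Proof.
rewrite /rfun; cbv zeta; rewrite (_ : m%:Z - i%:Z + i%:Z = m%:Z); last by lia.
by rewrite trunc_exp_coef /expz; ring.
Qed.

Lemma Hk_rfun b i : Hk (- i%:Z) (rfun b i).
Proof.
move=> n ni; rewrite /rfun; cbv zeta.
case E: (n + i%:Z) => [k|k]; first by lia.
rewrite /expz mulr0 add0r big1 ?mulr0 // => j _.
by rewrite /mono; case: eqP => [|_]; [lia | rewrite mulr0].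
Qed.

Lemma rfun_lead b i : (0 < i)%N -> rfun b i (- i%:Z) = 1.
Proof.
by move=> i_gt0; rewrite -sub0r rfun_coef i_gt0 fact0 invr1 mulr1 mulr1n mulr1 addrC subrK.
Qed.

Lemma signz_sub (m n : nat) : (-1 : C) ^ (m%:Z - n%:Z) = (-1) ^+ (m + n).
Proof.
rewrite expfzDr ?oppr_eq0 ?oner_eq0 // -exprnN invr_sign exprD //.
Qed.

Lemma Res_serneg_rfun_Hk b (p : nat) g :
  Hk p%:Z g -> Res g (serneg (rfun b p.+1)) = (-1) ^+ p.+1 * g p%:Z.
Proof.
move=> Hg; rewrite (Res_window p%:Z 1); last 2 first.
- exact: Hg.
- by apply: (Hk_le (Hk_serneg (Hk_rfun b p.+1))); lia.
rewrite /resw big_ord1 addr0 /serneg (_ : -1 - p%:Z = - p.+1%:Z); last by lia.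
by rewrite rfun_lead // -exprnN invr_sign mulr1 mulrC.
Qed.

Lemma weight_compl (b : C) (x : bool) :
  (b + (1 - b) * x%:R) * (b + (1 - b) * (~~ x)%:R) = b.
Proof. by case: x; rewrite ?mulr1n ?mulr0n; ring. Qed.

Lemma inv_fact_mul (n t : nat) : (t <= n)%N ->
  (t`!%:R)^-1 * ((n - t)`!%:R)^-1 = 'C(n, t)%:R / n`!%:R :> C.
Proof.
move=> tn; rewrite -(bin_fact tn) !natrM.
have nz k : (k`!%:R : C) != 0 by rewrite pnatr_eq0 -lt0n fact_gt0.
have bin_nz : ('C(n, t)%:R : C) != 0 by rewrite pnatr_eq0 -lt0n bin_gt0.
by field; rewrite !nz bin_nz.
Qed.

Lemma sum_sign_binomial (n : nat) : (0 < n)%N ->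
  \sum_(t < n.+1) (-1) ^+ t * 'C(n, t)%:R = 0 :> C.
Proof.
move=> n_gt0; have := exprDn (1 : C) (-1) n.
rewrite subrr expr0n eqn0Ngt n_gt0 mulr0n => binom_sum.
rewrite [RHS]binom_sum.
by apply: eq_bigr => t _; rewrite expr1n mul1r mulr_natr.
Qed.

(* With n = i + j - 1 exactly one of [t < i] and [n - t < j] holds, so each
   weight (b + (1-b)[t < i]) (b + (1-b)[n - t < j]) equals b. *)
Lemma Res_rfun_serneg_rfun b i j : (0 < i)%N -> (0 < j)%N ->
  Res (rfun b i) (serneg (rfun b j)) = 0.
Proof.
case: i => [|i] // _ j_gt0.
rewrite (Res_window (- i.+1%:Z) (i + j).+1); last 2 first.
- exact: Hk_rfun.
- by apply: (Hk_le (Hk_serneg (Hk_rfun b j))); lia.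
set n := (i + j)%N; rewrite /resw /serneg.
transitivity (\sum_(t < n.+1) (-1) ^+ i * b / n`!%:R * ((-1) ^+ t * 'C(n, t)%:R)).
  apply: eq_bigr => t _; have tn : (t <= n)%N by rewrite -ltnS.
  rewrite (_ : - i.+1%:Z + t%:Z = t%:Z - i.+1%:Z); last by lia.
  rewrite (_ : -1 - (t%:Z - i.+1%:Z) = (n - t)%N%:Z - j%:Z); last by lia.
  rewrite !rfun_coef (_ : (n - t)%N%:Z - j%:Z = i%:Z - t%:Z); last by lia.
  rewrite signz_sub (_ : (n - t < j)%N = ~~ (t < i.+1)%N); last by lia.
  move: (weight_compl b (t < i.+1)%N); set x := b + _; set y := b + _ => xy.
  transitivity ((-1) ^+ i * (-1) ^+ t * (x * y) * ((t`!%:R)^-1 * ((n - t)`!%:R)^-1)).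
    by rewrite exprD; ring.
  by rewrite xy inv_fact_mul //; ring.
by rewrite -mulr_sumr sum_sign_binomial ?mulr0 // addn_gt0 j_gt0 orbT.
Qed.

Lemma Hk_rspan b mu (c : 'I_mu -> C) :
  Hk (- mu%:Z) (sersum c (fun i => rfun b i.+1)).
Proof.
apply: Hk_sersum => i; apply: (Hk_le (Hk_rfun b i.+1)).
by have := ltn_ord i; lia.
Qed.

Lemma Wmu_Hk b mu f : Wmu b mu f -> Hk (- mu%:Z) f.
Proof.
move=> [c [h [Hh ->]]]; apply: Hk_seradd (Hk_rspan b mu c) _.
by apply: (Hk_le Hh); lia.
Qed.

Lemma Hk_Wmu b mu f : Hk mu%:Z f -> Wmu b mu f.
Proof.
move=> Hf; exists (fun _ => 0), f; split => //.
apply: functional_extensionality => n.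
by rewrite /seradd /sersum big1 ?add0r // => i _; rewrite mul0r.
Qed.

Lemma rfun_Wmu b mu i : (0 < i <= mu)%N -> Wmu b mu (rfun b i).
Proof.
case: i => [|i] //= imu.
exists (fun j => if j == Ordinal imu then 1 else 0), ser0; split => //.
apply: functional_extensionality => n.
rewrite /seradd /sersum /ser0 addr0 (bigD1 (Ordinal imu)) // eqxx mul1r.
by rewrite big1 ?Monoid.mulm1 // => j /negbTE ->; rewrite mul0r.
Qed.

Lemma Wmu_subspace b mu : subspace (Wmu b mu).
Proof.
split; [|split].
- by apply: Hk_Wmu.
- move=> _ _ [c [h [Hh ->]]] [d [h' [Hh' ->]]].
  exists (fun i => c i + d i), (seradd h h'); split; first exact: Hk_seradd.
  apply: functional_extensionality => n; rewrite /seradd /sersum.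
  under [in RHS]eq_bigr do rewrite mulrDl.
  by rewrite big_split /= addrACA.
- move=> a _ [c [h [Hh ->]]].
  exists (fun i => a * c i), (serscale a h); split.
    by move=> n nmu; rewrite /serscale Hh ?mulr0.
  apply: functional_extensionality => n; rewrite /serscale /seradd /sersum.
  by rewrite mulrDr mulr_sumr; congr (_ + _); apply: eq_bigr => i _; rewrite mulrA.
Qed.

Lemma Wmu_CKP b mu : CKP (Wmu b mu).
Proof.
move=> f g Wf Wg.
rewrite (Res_sym_window mu _ _ (Wmu_Hk _ _ _ Wf) (Hk_serneg (Wmu_Hk _ _ _ Wg))).
case: Wf => c [h [Hh ->]]; case: Wg => d [h' [Hh' ->]].
have Hh_hi : Hk (- mu%:Z + (mu + mu)%N%:Z) h by apply: (Hk_le Hh); lia.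
rewrite resw_addl [X in _ + X]resw_eq0l // addr0 resw_suml big1 // => i _.
have Hh'_hi : Hk (- - mu%:Z) (serneg h') by rewrite opprK; apply: Hk_serneg.
rewrite serneg_add serneg_sum resw_addr [X in _ + X]resw_eq0r // addr0.
rewrite resw_sumr big1 ?mulr0 // => j _.
rewrite -Res_sym_window ?Res_rfun_serneg_rfun ?mulr0 //.
- by apply: (Hk_le (Hk_rfun b i.+1)); have := ltn_ord i; lia.
- by apply: (Hk_le (Hk_serneg (Hk_rfun b j.+1))); have := ltn_ord j; lia.
Qed.

Lemma Hk_rspan_decomp b mu f : Hk (- mu%:Z) f ->
  exists (c : 'I_mu -> C) g, Hk 0 g /\ f = seradd (sersum c (fun i => rfun b i.+1)) g.
Proof.
elim: mu f => [|mu IH] f Hf.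
  exists (fun _ => 0), f; split => //.
  by apply: functional_extensionality => n; rewrite /seradd /sersum big_ord0 add0r.
pose a := f (- mu.+1%:Z).
have Hf' : Hk (- mu%:Z) (seradd f (serscale (- a) (rfun b mu.+1))).
  move=> n nmu; rewrite /seradd /serscale; case: (ltrP n (- mu.+1%:Z)) => n_lt.
    by rewrite Hf // Hk_rfun // mulr0 addr0.
  by rewrite (_ : n = - mu.+1%:Z) ?rfun_lead ?mulr1 ?addrN //; lia.
have [c [g [Hg Ef']]] := IH _ Hf'.
exists (fun i : 'I_mu.+1 => if insub (val i) is Some j then c j else a), g.
split => //; apply: functional_extensionality => n.
have := congr1 (fun h => h n) Ef'; rewrite /seradd /serscale /sersum => Efn.
rewrite big_ord_recr /= insubF ?ltnn //.
under eq_bigr => i _ do rewrite valK.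
by rewrite addrAC -Efn mulNr subrK.
Qed.

Lemma orth_rfun_Hk b mu g : Hk 0 g ->
  (forall i, (1 <= i <= mu)%N -> Res g (serneg (rfun b i)) = 0) -> Hk mu%:Z g.
Proof.
move=> Hg; elim: mu => [|p IH] // orth.
have Hp : Hk p%:Z g by apply: IH => i /andP [i_gt0 ip]; rewrite orth ?i_gt0 ?(leqW ip).
have := orth p.+1 (leqnn _); rewrite Res_serneg_rfun_Hk //.
move=> /eqP; rewrite mulf_eq0 signr_eq0 /= => /eqP gp n np.
by case: (ltrP n p%:Z) => [|pn]; [exact: Hp | rewrite (_ : n = p%:Z) //; lia].
Qed.

Lemma Wmu_charac b mu f : Wmu b mu f <->
  Hk (- mu%:Z) f /\ forall i, (1 <= i <= mu)%N -> Res f (serneg (rfun b i)) = 0.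
Proof.
split.
  move=> Wf; split; first exact: Wmu_Hk _ _ _ Wf.
  by move=> i imu; apply: Wmu_CKP Wf (rfun_Wmu b mu i imu).
move=> [Hf orth]; have [c [g [Hg Ef]]] := Hk_rspan_decomp b mu f Hf.
exists c, g; split => //; apply: (orth_rfun_Hk b mu g Hg) => i imu.
have Hri : Hk (- mu%:Z) (serneg (rfun b i)).
  by apply: (Hk_le (Hk_serneg (Hk_rfun b i))); case/andP: imu; lia.
have Hg' : Hk (- mu%:Z) g by apply: (Hk_le Hg); lia.
have := orth i imu; rewrite !(Res_sym_window mu) // Ef resw_addl resw_suml.
rewrite big1 ?add0r // => j _.
rewrite -Res_sym_window ?Res_rfun_serneg_rfun ?mulr0 //; first by case/andP: imu.
by apply: (Hk_le (Hk_rfun b j.+1)); have := ltn_ord j; lia.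
Qed.

Lemma rspan_free b mu (c : 'I_mu -> C) :
  Hk 0 (sersum c (fun i => rfun b i.+1)) -> forall i, c i = 0.
Proof.
elim: mu c => [|mu IH] c Hc; first by case.
have split_sum k : sersum c (fun i => rfun b i.+1) k =
    sersum (fun j => c (widen_ord (leqnSn mu) j)) (fun i => rfun b i.+1) k
    + c ord_max * rfun b mu.+1 k.
  by rewrite /sersum big_ord_recr.
have c_top : c ord_max = 0.
  have lt0 : - mu.+1%:Z < 0 by lia.
  have lt_mu : - mu.+1%:Z < - mu%:Z by lia.
  by move: (Hc _ lt0); rewrite split_sum (Hk_rspan _ _ _ _ lt_mu) add0r rfun_lead // mulr1.
have c_low := IH (fun j => c (widen_ord (leqnSn mu) j)).
move=> i; case: (ltnP i mu) => [imu | imu].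
  rewrite (_ : i = widen_ord (leqnSn mu) (Ordinal imu)); last exact: val_inj.
  by apply: c_low => k k_lt0; move: (Hc k k_lt0); rewrite split_sum c_top mul0r addr0.
by rewrite (_ : i = ord_max) //; apply: val_inj => /=; have := ltn_ord i; lia.
Qed.

Lemma sersum_mono_at (a : int) n (d : 'I_n -> C) (j : 'I_n) :
  sersum d (fun i => mono (a + i%:Z)) (a + j%:Z) = d j.
Proof.
rewrite /sersum (bigD1 j) // /mono eqxx mulr1 big1 ?Monoid.mulm1 // => i ij.
rewrite (inj_eq (addrI a)) eqz_nat ifN ?mulr0 //.
by apply: contra ij => /eqP ji; apply/eqP/val_inj.
Qed.

Lemma Hk_mono_span (a : int) n (d : 'I_n -> C) :
  Hk a (sersum d (fun j => mono (a + j%:Z))).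
Proof. by apply: Hk_sersum => j; apply: Hk_mono; lia. Qed.

Lemma Hk_sub_trunc (a : int) n h : Hk a h ->
  Hk (a + n%:Z) (fun k => h k - sersum (fun j : 'I_n => h (a + j%:Z))
                                       (fun j => mono (a + j%:Z)) k).
Proof.
move=> Hh k k_lt; case: (ltrP k a) => [k_lt_a | a_le_k].
  by rewrite Hh // Hk_mono_span // subrr.
have kj : (`|k - a|%N < n)%N by lia.
have -> : k = a + (Ordinal kj : nat)%:Z by rewrite /=; lia.
by rewrite sersum_mono_at subrr.
Qed.

Definition Wbasis b mu n (i : 'I_(mu + n)) : ser :=
  match split i with inl j => rfun b j.+1 | inr j => mono (mu%:Z + j%:Z) end.

Lemma sersum_Wbasis b mu n (u : 'I_(mu + n) -> C) :
  sersum u (Wbasis b mu n) =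
  seradd (sersum (fun j => u (lshift n j)) (fun j => rfun b j.+1))
         (sersum (fun j => u (rshift mu j)) (fun j => mono (mu%:Z + j%:Z))).
Proof.
apply: functional_extensionality => k; rewrite /sersum /seradd big_split_ord.
by congr (_ + _); apply: eq_bigr => j _; rewrite /Wbasis ?(unsplitK (inl _)) ?(unsplitK (inr _)).
Qed.

Lemma Wbasis_Wmu b mu n i : Wmu b mu (Wbasis b mu n i).
Proof.
rewrite /Wbasis; case: split => j; first exact: rfun_Wmu b mu j.+1 (ltn_ord j).
by apply: Hk_Wmu; apply: Hk_mono; lia.
Qed.

Lemma Wbasis_free b mu n (u : 'I_(mu + n) -> C) :
  Hk (mu + n)%N%:Z (sersum u (Wbasis b mu n)) -> forall i, u i = 0.
Proof.
rewrite sersum_Wbasis => Hu.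
have u_lo : forall j, u (lshift n j) = 0.
  apply: (rspan_free b mu) => k k_lt0.
  have k_lt : k < (mu + n)%N%:Z by lia.
  by move: (Hu k k_lt); rewrite /seradd (Hk_mono_span _ _ _ k) ?addr0 //; lia.
have u_hi j : u (rshift mu j) = 0.
  have := Hu (mu%:Z + j%:Z); rewrite /seradd sersum_mono_at.
  rewrite /sersum big1 ?add0r => [|i _]; last by rewrite u_lo mul0r.
  by apply; have := ltn_ord j; lia.
by move=> i; rewrite -[i]splitK; case: split => j; [exact: u_lo | exact: u_hi].
Qed.

Lemma Wbasis_span b mu n f : Wmu b mu f ->
  exists u, Hk (mu + n)%N%:Z (fun k => f k - sersum u (Wbasis b mu n) k).
Proof.
move=> [c [h [Hh ->]]].
pose u (i : 'I_(mu + n)) := match split i with inl j => c j | inr j => h (mu%:Z + j%:Z) end.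
exists u; have -> : sersum u (Wbasis b mu n) =
    seradd (sersum c (fun j => rfun b j.+1))
           (sersum (fun j : 'I_n => h (mu%:Z + j%:Z)) (fun j => mono (mu%:Z + j%:Z))).
  rewrite sersum_Wbasis; congr seradd; congr sersum; apply: functional_extensionality => j.
    by rewrite /u (unsplitK (inl _)).
  by rewrite /u (unsplitK (inr _)).
move=> k k_lt; rewrite /seradd opprD addrACA subrr add0r.
by apply: (Hk_sub_trunc mu%:Z n h Hh); rewrite -PoszD.
Qed.

Lemma Wmu_quotdim b mu n : quotdim (Wmu b mu) (mu + n)%N%:Z (mu + n).
Proof.
exists (Wbasis b mu n); split; first exact: Wbasis_Wmu.
by split; [exact: Wbasis_free | move=> f; exact: Wbasis_span].
Qed.

Definition coef_mx (lo kn : nat) {d : nat} (w : 'I_d -> ser) : 'M[C]_(d, lo + kn) :=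
  \matrix_(i, j) w i ((j : nat)%:Z - lo%:Z).

Lemma coef_mx_free (lo kn : nat) {d : nat} (w : 'I_d -> ser) :
  (forall i, Hk (- lo%:Z) (w i)) ->
  (forall c : 'I_d -> C, Hk kn%:Z (sersum c w) -> forall i, c i = 0) ->
  row_free (coef_mx lo kn w).
Proof.
move=> Hw w_free; rewrite -kermx_eq0; apply/rowV0P => v /sub_kermxP v_ker.
suff Hv : Hk kn%:Z (sersum (fun i => v 0 i) w).
  by apply/rowP => i; rewrite mxE (w_free _ Hv i).
move=> n n_lt; case: (ltrP n (- lo%:Z)) => n_lo; first exact: (Hk_sersum _ _ _ _ Hw).
have jlt : (absz (n + lo%:Z)%R < lo + kn)%N by lia.
have := congr1 (fun M : 'M[C]_(1, lo + kn) => M 0 (Ordinal jlt)) v_ker.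
rewrite !mxE => <-; apply: eq_bigr => i _; rewrite mxE /=.
by have -> : (absz (n + lo%:Z))%:Z - lo%:Z = n by lia.
Qed.

Lemma coef_mx_sub (lo kn : nat) {d1 d2 : nat} (w1 : 'I_d1 -> ser) (w2 : 'I_d2 -> ser) :
  (forall i, exists c : 'I_d2 -> C, Hk kn%:Z (fun n => w1 i n - sersum c w2 n)) ->
  (coef_mx lo kn w1 <= coef_mx lo kn w2)%MS.
Proof.
move=> w1_span; apply/row_subP => i; have [c Hc] := w1_span i.
suff -> : row i (coef_mx lo kn w1) = (\row_j c j) *m coef_mx lo kn w2 by exact: submxMl.
apply/rowP => j; rewrite !mxE; under eq_bigr do rewrite !mxE.
apply/eqP; rewrite -subr_eq0; apply/eqP.
by apply: Hc; have := ltn_ord j; lia.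
Qed.

Lemma quotdim_unique (W : ser -> Prop) lo kn d1 d2 :
  (forall f, W f -> Hk (- lo%:Z) f) ->
  quotdim W kn%:Z d1 -> quotdim W kn%:Z d2 -> d1 = d2.
Proof.
move=> W_lo [w1 [W1 [free1 span1]]] [w2 [W2 [free2 span2]]].
have /eqP rk1 := coef_mx_free lo kn w1 (fun i => W_lo _ (W1 i)) free1.
have /eqP rk2 := coef_mx_free lo kn w2 (fun i => W_lo _ (W2 i)) free2.
have le12 := mxrankS (coef_mx_sub lo kn w1 w2 (fun i => span2 _ (W1 i))).
have le21 := mxrankS (coef_mx_sub lo kn w2 w1 (fun i => span1 _ (W2 i))).
rewrite rk1 rk2 in le12 le21.
by apply/eqP; rewrite eqn_leq le12 le21.
Qed.

Lemma Wmu_index_ge b mu (k : int) :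
  (forall f, Hk k f -> Wmu b mu f) -> mu%:Z <= k.
Proof.
move=> HkW; case: (lerP mu%:Z k) => // k_lt; exfalso.
case: mu HkW k_lt => [|m] HkW k_lt.
  have k_le : k <= -1 by lia.
  have /Wmu_Hk Hm := HkW _ (Hk_mono (-1) k k_le).
  by move: (Hm (-1) isT); rewrite /mono eqxx => /eqP; rewrite oner_eq0.
have k_m : k <= m%:Z by lia.
have [_ orth] := (Wmu_charac b m.+1 (mono m%:Z)).1 (HkW _ (Hk_mono _ _ k_m)).
move: (orth m.+1 (leqnn _)).
rewrite Res_serneg_rfun_Hk; last exact: Hk_mono.
rewrite /mono eqxx mulr1 => /eqP.
by rewrite signr_eq0.
Qed.

Lemma Wmu_Gr b mu : Gr (Wmu b mu).
Proof.
split; first exact: Wmu_subspace.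
exists (mu.+1%:Z), (- mu%:Z); split; first by lia.
split; last exact: Wmu_Hk.
by move=> f Hf; apply: Hk_Wmu; apply: (Hk_le Hf); lia.
Qed.

Lemma Wmu_index b mu (k : int) (d : nat) :
  (forall f, Hk k f -> Wmu b mu f) -> quotdim (Wmu b mu) k d -> k = d%:Z.
Proof.
move=> HkW Qd; have := Wmu_index_ge b mu k HkW.
case: k HkW Qd => [kn|kn] HkW Qd mu_le; last by lia.
have [n kn_def] : exists n, kn = (mu + n)%N by exists (kn - mu)%N; lia.
rewrite kn_def in Qd *.
by rewrite (quotdim_unique _ mu _ _ _ (Wmu_Hk b mu) Qd (Wmu_quotdim b mu n)).
Qed.

Theorem proposition2 (b : C) (mu : nat) :
  b != 0 -> b != 1 ->
  Grj 0 (Wmu b mu) /\ CKP (Wmu b mu) /\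
  (forall f : ser, Wmu b mu f <->
     (Hk (- mu%:Z) f /\
      forall i : nat, (1 <= i <= mu)%N -> Res f (serneg (rfun b i)) = 0)).
Proof.
move=> _ _; split; last by split; [exact: Wmu_CKP | exact: Wmu_charac].
split; first exact: Wmu_Gr.
by move=> k HkW d Qd; rewrite (Wmu_index b mu k d HkW Qd) subrr.
Qed.
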